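(* If $x=x_1\cdots x_n\in\mathrm{Sort}_n(123,321)$, then $x_1\in\{n-1,n\}$.
   Context: A permutation contains a pattern $p$ if it has a subsequence order-isomorphic to $p$; otherwise it avoids $p$. For a set $T$ of patterns, the map $s_T$ is defined as follows: the entries of the input permutation are read from left to right, with an initially empty stack. At each step, if the input is nonempty and pushing the next input entry onto the stack produces a stack whose contents, read from top to bottom, avoid every pattern in $T$, that entry is pushed; otherwise the top entry of the stack is popped and appended to the output. When the input is exhausted, the remaining stack entries are popped one at a time to the output. Write $s_{\sigma,\tau}=s_{\{\sigma,\tau\}}$ and $s=s_{\{21\}}$ (West's stack-sorting map). $\mathrm{Sort}_n(\sigma,\tau)$ is the set of $x\in S_n$ with $s(s_{\sigma,\tau}(x))=12\cdots n$. *)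

From mathcomp Require Import all_boot.
Set Implicit Arguments. Unset Strict Implicit. Unset Printing Implicit Defensive.

Definition order_iso (s p : seq nat) : bool :=
  (size s == size p) &&
  all (fun i => all (fun j =>
     (nth 0 s i < nth 0 s j) == (nth 0 p i < nth 0 p j))
     (iota 0 (size p))) (iota 0 (size p)).

Fixpoint subseqs (w : seq nat) : seq (seq nat) :=
  match w with
  | [::] => [:: [::]]
  | a :: r => let l := subseqs r in map (cons a) l ++ l
  end.

Definition contains (w p : seq nat) : bool :=
  has (fun s => order_iso s p) (subseqs w).

Definition avoids_all (T : seq (seq nat)) (w : seq nat) : bool :=
  all (fun p => ~~ contains w p) T.

(* One run of the pattern-avoiding stack machine s_T.
   inp: remaining input (left to right); stk: stack read top to bottom;
   out: output so far.  When the input is exhausted the stack is popped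
   top first, i.e. [out ++ stk]. *)
Fixpoint stack_run (T : seq (seq nat)) (fuel : nat)
    (inp stk out : seq nat) : seq nat :=
  match fuel with
  | 0 => out ++ stk
  | f.+1 =>
    match inp with
    | [::] => out ++ stk
    | a :: r =>
      if avoids_all T (a :: stk) then stack_run T f r (a :: stk) out
      else match stk with
           | b :: st => stack_run T f inp st (rcons out b)
           | [::] => out ++ stk (* cannot occur for patterns of length >= 2 *)
           end
    end
  end.

(* s_T; every step pushes or pops, so 2 * size x steps suffice *)
Definition sT (T : seq (seq nat)) (x : seq nat) : seq nat :=
  stack_run T (2 * size x) x [::] [::].

Definition west_s (x : seq nat) : seq nat := sT [:: [:: 2; 1]] x.

Definition s2 (sigma tau : seq nat) (x : seq nat) : seq nat :=
  sT [:: sigma; tau] x.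

Definition in_Sort (n : nat) (sigma tau : seq nat) (x : seq nat) : Prop :=
  perm_eq x (iota 1 n) /\ west_s (s2 sigma tau x) = iota 1 n.

Example ex1 : west_s [:: 3; 1; 2] = [:: 1; 2; 3]. Proof. by []. Qed.
Example ex2 : west_s [:: 2; 3; 1] = [:: 2; 1; 3]. Proof. by []. Qed.
Example ex3 : s2 [:: 1;2;3] [:: 3;2;1] [:: 1; 2; 3; 4] = [:: 2;3;4;1]. Proof. by []. Qed.
Example ex4 : west_s [:: 4;1;3;2] = [:: 1;2;3;4]. Proof. by []. Qed.

From mathcomp Require Import all_boot zify.
Set Implicit Arguments. Unset Strict Implicit. Unset Printing Implicit Defensive.

(* Let y = s_{123,321}(x), k = x_1, and suppose k < n-1.  Since West's map sorts y, y
   avoids 231.  The entry k is pushed first and stays at the bottom of the stack (two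
   entries never form a pattern of length 3), so y ends with k; hence n precedes n-1 in y,
   otherwise (n-1, n, k) is a 231.  Therefore n-1 is still unread when n is pushed, and at
   that moment the stack below n is [k] or [t; k] with t < k: any other stack forms a 123
   or a 321 with n.  Over [k], n stays on the stack until n-1 is pushed on top of it, which
   puts n-1 before n in y.  Over [t; k], n is popped only when an entry a < t arrives; then
   t is output at once, and from then on some entry z < t stays directly above k until n-1
   is pushed, so (t, n-1, z) is a 231 in y. *)

Lemma subseq_cons2 (T : eqType) (a : T) s t : subseq (a :: s) (a :: t) = subseq s t.
Proof. by rewrite /= eqxx. Qed.

Lemma subseq_rcons2 (T : eqType) (w : seq T) u k : u \in w -> subseq [:: u; k] (rcons w k).
Proof.
by move=> u_w; rewrite -cats1; apply: (@cat_subseq _ [:: u]); rewrite ?sub1seq ?mem_head.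
Qed.

Lemma mem2_subseq (T : eqType) (s r : seq T) :
  subseq s r -> forall u v, mem2 s u v -> mem2 r u v.
Proof. by move=> s_r u v; rewrite !mem2E => /subseq_trans; apply. Qed.

Lemma mem2_pivotl (T : eqType) (p r : seq T) c u : uniq (p ++ c :: r) -> u != c ->
  mem2 (p ++ c :: r) u c = (u \in p).
Proof.
rewrite cat_uniq /= => /and4P[_ /norP[c_p _] c_r _] u_c.
by rewrite mem2_cat mem2_cons eq_sym (negbTE u_c) mem2rf // mem2rf // mem_head andbT.
Qed.

Lemma mem2_pivotr (T : eqType) (p r : seq T) c u : uniq (p ++ c :: r) -> u != c ->
  mem2 (p ++ c :: r) c u = (u \in r).
Proof.
rewrite cat_uniq /= => /and4P[_ /norP[c_p _] _ _] u_c.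
by rewrite mem2_cat mem2_cons eqxx inE (negbTE u_c) mem2lf // (negbTE c_p) /= orbF.
Qed.

Lemma mem2_sorted_leq s u v : sorted ltn s -> mem2 s u v -> u <= v.
Proof.
rewrite mem2E; case: eqP => [-> // | _] s_ltn /subseq_sorted.
by move=> /(_ _ ltn_trans s_ltn) /= /andP[/ltnW].
Qed.

Lemma mem_subseqs (s w : seq nat) : (s \in subseqs w) = subseq s w.
Proof.
elim: w s => [|a w IH] [|b s] //=; rewrite mem_cat IH ?sub0seq ?orbT //.
case: eqP => [<-|ne].
  have cons_inj : injective (cons b) by move=> ? ? [].
  by rewrite (mem_map cons_inj) IH orb_idr // => /cons_subseq.
by case: (b :: s \in _) /mapP => // -[s' _ [/ne]].
Qed.

Lemma containsP w p : reflect (exists2 s, subseq s w & order_iso s p) (contains w p).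
Proof.
by apply: (iffP hasP) => -[s s_w iso_s]; exists s; rewrite // ?mem_subseqs // -mem_subseqs.
Qed.

Lemma avoids_all_short T w : all (fun p => size w < size p) T -> avoids_all T w.
Proof.
move=> /allP short; apply/allP => p /short w_p; apply/containsP => -[s /size_subseq s_w].
by rewrite /order_iso => /andP[/eqP s_p _]; move: w_p; rewrite -s_p ltnNge s_w.
Qed.

Lemma contains_size3 w p : size p = 3 ->
  contains w p = has (order_iso^~ p) [seq s <- subseqs w | size s == 3].
Proof.
move=> p3; rewrite /contains; elim: (subseqs w) => //= s l ->.
case: ifP => // /negbT s3; suff -> : order_iso s p = false by [].
by apply: contraNF s3; rewrite -p3 => /andP[].
Qed.

Lemma order_iso21 u v : order_iso [:: u; v] [:: 2; 1] = (v < u).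
Proof. by rewrite /order_iso /= !ltnn; case: ltngtP. Qed.

Lemma order_iso123 u v w : order_iso [:: u; v; w] [:: 1; 2; 3] = (u < v < w).
Proof.
rewrite /order_iso /= !ltnn.
by case: (ltngtP u v); case: (ltngtP v w); case: (ltngtP u w) => //= *; lia.
Qed.

Lemma order_iso321 u v w : order_iso [:: u; v; w] [:: 3; 2; 1] = (w < v < u).
Proof.
rewrite /order_iso /= !ltnn.
by case: (ltngtP u v); case: (ltngtP v w); case: (ltngtP u w) => //= *; lia.
Qed.

Notation T21 := [:: [:: 2; 1]].
Notation T123_321 := [:: [:: 1; 2; 3]; [:: 3; 2; 1]].

Definition monotone3 (u v w : nat) := (u < v < w) || (w < v < u).

Lemma avoids3 u v w : avoids_all T123_321 [:: u; v; w] = ~~ monotone3 u v w.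
Proof.
by rewrite /avoids_all /= !contains_size3 //= order_iso123 order_iso321 !orbF andbT negb_or.
Qed.

Lemma avoids4 a b c d : avoids_all T123_321 [:: a; b; c; d] =
  ~~ [|| monotone3 a b c, monotone3 a b d, monotone3 a c d | monotone3 b c d].
Proof.
rewrite /avoids_all /= !contains_size3 //= !order_iso123 !order_iso321 !orbF andbT.
rewrite /monotone3 !negb_or.
by case: (a < b < c); case: (a < b < d); case: (a < c < d); case: (b < c < d);
   case: (c < b < a); case: (d < b < a); case: (d < c < a); case: (d < c < b).
Qed.

Lemma monotone3_not_avoids s u v w :
  subseq [:: u; v; w] s -> monotone3 u v w -> ~~ avoids_all T123_321 s.
Proof.
move=> uvw_s /orP mono; rewrite /avoids_all /= andbT negb_and !negbK.
by case: mono => mono; apply/orP; [left | right]; apply/containsP; exists [:: u; v; w];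
  rewrite ?order_iso123 ?order_iso321.
Qed.

Lemma descent_not_avoids21 b c stk : b \in stk -> b < c -> ~~ avoids_all T21 (c :: stk).
Proof.
move=> b_stk b_c; rewrite /avoids_all /= andbT negbK; apply/containsP.
by exists [:: c; b]; rewrite ?order_iso21 //= eqxx sub1seq.
Qed.

Section StackMachine.

Variables (T : seq (seq nat)) (x : seq nat).

Inductive reachable : seq nat -> seq nat -> seq nat -> Prop :=
| reachable_init : reachable x [::] [::]
| reachable_push a inp stk out : reachable (a :: inp) stk out ->
    avoids_all T (a :: stk) -> reachable inp (a :: stk) out
| reachable_pop a inp b stk out : reachable (a :: inp) (b :: stk) out ->
    ~~ avoids_all T (a :: b :: stk) -> reachable (a :: inp) stk (rcons out b).

(* Every step decreases 2 |inp| + |stk| by one, so the fuel of [sT] is never exhausted. *)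
Lemma reachable_run inp stk out : reachable inp stk out ->
  stack_run T (2 * size inp + size stk) inp stk out = sT T x.
Proof.
elim=> [|a i s o _ <- av|a i b s o _ <- nav]; first by rewrite addn0.
  have -> : 2 * size (a :: i) + size s = (2 * size i + size (a :: s)).+1 by rewrite /=; lia.
  by rewrite /= av.
have -> : 2 * size (a :: i) + size (b :: s) = (2 * size (a :: i) + size s).+1 by rewrite /=; lia.
by rewrite /= (negbTE nav).
Qed.

Lemma reachable_perm inp stk out : reachable inp stk out -> perm_eq (out ++ stk ++ inp) x.
Proof.
elim=> // [a i s o _ IH _|a i b s o _ IH _]; apply: perm_trans IH.
  by rewrite perm_cat2l /= -[a :: _ ++ _]cat1s perm_catCA.
by rewrite cat_rcons.
Qed.

Lemma reachable_suffix inp stk out : reachable inp stk out -> exists p, x = p ++ inp.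
Proof.
elim=> [|a i s o _ [p ->] _|a i b s o _ [p ->] _]; first by exists [::].
  by exists (rcons p a); rewrite cat_rcons.
by exists p.
Qed.

Lemma stack_run_prefix f inp stk out :
  exists2 r, stack_run T f inp stk out = out ++ r & subseq stk r.
Proof.
elim: f inp stk out => [|f IH] [|a inp] stk out /=; try by exists stk.
case: ifP => _.
  have [r -> stk_r] := IH inp (a :: stk) out.
  by exists r => //; apply: subseq_trans stk_r; apply: subseq_cons.
case: stk => [|b stk]; first by exists [::].
have [r -> stk_r] := IH (a :: inp) stk (rcons out b).
by exists (b :: r); rewrite ?cat_rcons ?subseq_cons2.
Qed.

Lemma sT_prefix inp stk out : reachable inp stk out ->
  exists2 r, sT T x = out ++ r & subseq stk r.
Proof. by move=> reach; rewrite -(reachable_run reach); apply: stack_run_prefix. Qed.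

Definition steps_to (R : seq nat -> seq nat -> seq nat -> Prop) inp stk out :=
  if inp is a :: r then
    (avoids_all T (a :: stk) -> R r (a :: stk) out) /\
    (forall b st, stk = b :: st -> ~~ avoids_all T (a :: stk) -> R inp st (rcons out b))
  else False.

Hypothesis avoids1 : forall a, avoids_all T [:: a].

Lemma reachable_until (P Q : seq nat -> seq nat -> seq nat -> Prop) :
  (forall inp stk out, reachable inp stk out -> P inp stk out ->
     Q inp stk out \/ steps_to (fun i s o => P i s o \/ Q i s o) inp stk out) ->
  forall inp stk out, reachable inp stk out -> P inp stk out ->
  exists inp' stk' out', reachable inp' stk' out' /\ Q inp' stk' out'.
Proof.
move=> step inp stk out; have [m] := ubnP (2 * size inp + size stk).
elim: m inp stk out => // m IH inp stk out lt_m reach Pc.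
case: (step _ _ _ reach Pc) => [Qc|]; first by exists inp, stk, out.
case: inp lt_m reach {Pc} => [|a inp] //= lt_m reach [push pop].
case av: (avoids_all T (a :: stk)).
  have reach' := reachable_push reach av.
  case: (push av) => [|Qc]; last by exists inp, (a :: stk), out.
  by apply: IH reach'; move: lt_m; rewrite /= mulnS; lia.
case: stk reach av pop lt_m {push} => [|b stk] reach av pop lt_m.
  by rewrite avoids1 in av.
have reach' := reachable_pop reach (negbT av).
case: (pop b stk erefl (negbT av)) => [|Qc]; last by exists (a :: inp), stk, (rcons out b).
by apply: IH reach'; move: lt_m; rewrite /= mulnS; lia.
Qed.

Lemma sT_final : exists stk out, reachable [::] stk out /\ sT T x = out ++ stk.
Proof.
have [i [s [o [reach i0]]]] : exists i s o, reachable i s o /\ i = [::].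
  apply: (reachable_until (P := fun _ _ _ => True)) reachable_init _ => // i s o _ _.
  by case: i => [|a i]; [left | right; split=> *; left].
move: reach; rewrite i0 => reach; exists s, o; split=> //.
by rewrite -(reachable_run reach); case: (size s).
Qed.

Lemma perm_sT : perm_eq (sT T x) x.
Proof. by have [s [o [/reachable_perm]]] := sT_final; rewrite cats0 => + ->. Qed.

Lemma mem2_sT_out inp stk out u v : reachable inp stk out ->
  u \in out -> v \in stk ++ inp -> mem2 (sT T x) u v.
Proof.
move=> reach u_out v_rest; have [r sT_eq _] := sT_prefix reach.
have perm_r : perm_eq r (stk ++ inp).
  by rewrite -(perm_cat2l out) -sT_eq (perm_trans perm_sT) // perm_sym reachable_perm.
by rewrite sT_eq mem2_cat u_out (perm_mem perm_r) v_rest !orbT.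
Qed.

Lemma mem2_sT_stack inp stk out u v : reachable inp stk out ->
  mem2 stk u v -> mem2 (sT T x) u v.
Proof.
move=> reach uv; have [r -> /mem2_subseq r_uv] := sT_prefix reach.
by rewrite mem2_cat r_uv ?orbT.
Qed.

End StackMachine.

Lemma reachable_bottom T k x' inp stk out : (forall a b, avoids_all T [:: a; b]) ->
  reachable T (k :: x') inp stk out ->
  (stk = [::] /\ inp = k :: x') \/ exists w, stk = rcons w k.
Proof.
move=> avoids2.
elim=> [|a i s o _ [[-> [-> _]]|[w ->]] _|a i b s o _ [[//]|[[|c w]]] + nav]; first by left.
- by right; exists [::].
- by right; exists (a :: w).
- by case=> b_k s_nil; rewrite b_k s_nil avoids2 in nav.
- by case=> _ ->; right; exists w.
Qed.

Lemma west_sorted_avoids231 y a b c :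
  sorted ltn (west_s y) -> mem2 y b c -> mem2 y c a -> a < b < c -> False.
Proof.
move=> sorted_out bc ca /andP[ab bc_lt].
have avoids1 a' : avoids_all T21 [:: a'] by apply: avoids_all_short.
have uniq_y : uniq y.
  rewrite -(perm_uniq (perm_sT y avoids1)).
  by apply: sorted_uniq sorted_out; [apply: ltn_trans | apply: ltnn].
have [i [s [o [reach [r i_eq]]]]] :
    exists i s o, reachable T21 y i s o /\ exists r, i = c :: r.
  apply: (reachable_until avoids1 (P := fun i _ _ => c \in i)) (@reachable_init _ _) (mem2r bc).
  move=> [|d i] s o _ //; rewrite inE; case: eqP => [-> _|_ /= c_i]; first by left; exists i.
  by right; split=> *; left; rewrite ?inE c_i ?orbT.
subst i; have [p y_eq] := reachable_suffix reach.
have b_p : b \in p by rewrite -(@mem2_pivotl _ p r c) -?y_eq // neq_ltn bc_lt.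
have a_r : a \in r by rewrite -(@mem2_pivotr _ p r c) -?y_eq // neq_ltn (ltn_trans ab).
have b_out_stk : b \in o ++ s.
  by move: (reachable_perm reach); rewrite y_eq catA perm_cat2r => /perm_mem ->.
(* c cannot be pushed onto b, so b is output before c is read, while a is still unread. *)
have [i' [s' [o' [reach' [b_out a_rest]]]]] :
    exists i s o, reachable T21 y i s o /\ b \in o /\ a \in s ++ i.
  apply: (reachable_until avoids1 (P := fun i s o => i = c :: r /\ b \in o ++ s)) reach _ => //.
  move=> _ s2 o2 _ [-> /[!mem_cat] /orP[b_o|b_s]].
    by left; rewrite inE a_r !orbT.
  right; split=> [|d st s_eq _].
    by rewrite (negbTE (descent_not_avoids21 b_s bc_lt)).
  by left; split=> //; rewrite cat_rcons -s_eq mem_cat b_s orbT.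
have := mem2_sorted_leq sorted_out (mem2_sT_out avoids1 reach' b_out a_rest).
by rewrite leqNgt ab.
Qed.

Lemma avoids1_123_321 a : avoids_all T123_321 [:: a].
Proof. exact: avoids_all_short. Qed.

Lemma avoids2_123_321 a b : avoids_all T123_321 [:: a; b].
Proof. exact: avoids_all_short. Qed.

Section FirstEntry.

Variables (n k : nat) (x' : seq nat).
Hypothesis perm_x : perm_eq (k :: x') (iota 1 n).
Hypothesis sorted_out : sorted ltn (west_s (sT T123_321 (k :: x'))).
Hypothesis k_small : k < n.-1.

Local Notation x := (k :: x').
Local Notation y := (sT T123_321 x).
Local Notation reach := (reachable T123_321 x).

Lemma mem_x u : (u \in x) = (0 < u <= n).
Proof. by rewrite (perm_mem perm_x) mem_iota; lia. Qed.

Lemma reach_uniq i s o : reach i s o -> uniq (o ++ s ++ i).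
Proof. by move/reachable_perm/perm_uniq ->; rewrite (perm_uniq perm_x) iota_uniq. Qed.

Lemma reach_mem i s o u : reach i s o -> (u \in x) = (u \in o ++ s ++ i).
Proof. by move/reachable_perm/perm_mem ->. Qed.

Lemma stack_input_neq i s o u v : reach i s o -> u \in s -> v \in i -> u != v.
Proof.
move/reach_uniq; rewrite uniq_catCA cat_uniq => /and3P[_ /hasPn disj _] u_s v_i.
by apply: contraNneq (disj v _) => [<- //|]; rewrite mem_cat v_i orbT.
Qed.

Lemma lt_n u : u \in x -> u != n -> u < n.
Proof. by rewrite mem_x => /andP[_ u_le] u_n; rewrite ltn_neqAle u_n u_le. Qed.

Lemma input_lt_n a i s o : reach (a :: i) s o -> n \in s -> a < n.
Proof.
move=> r n_s; apply: lt_n; first by rewrite (reach_mem _ r) !mem_cat mem_head !orbT.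
by rewrite eq_sym (stack_input_neq r n_s (mem_head a i)).
Qed.

Lemma stack_lt_n u i s o : reach i s o -> n \in i -> u \in s -> u < n.
Proof.
move=> r n_i u_s; apply: lt_n; first by rewrite (reach_mem _ r) !mem_cat u_s !orbT.
exact: stack_input_neq r u_s n_i.
Qed.

Lemma last_y : last 0 y = k.
Proof.
have [s [o [r ->]]] := sT_final x avoids1_123_321.
by case: (reachable_bottom avoids2_123_321 r) => [[_ //]|[w ->]]; rewrite last_cat last_rcons.
Qed.

Lemma not_mem2_y : ~ mem2 y n.-1 n.
Proof.
move=> Mn; apply: (west_sorted_avoids231 sorted_out Mn (a := k)); last lia.
have := mem2_last 0 y n; rewrite last_y => ->.
by rewrite (perm_mem (perm_sT _ avoids1_123_321)) mem_x; lia.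
Qed.

Lemma not_mem2_stack i s o : reach i s o -> ~ mem2 s n.-1 n.
Proof. by move=> r /(mem2_sT_stack r); apply: not_mem2_y. Qed.

Lemma n_pushed : exists r w o, reach (n :: r) (rcons w k) o /\
  avoids_all T123_321 (n :: rcons w k) /\ n.-1 \in r.
Proof.
have n_x : n \in x by rewrite mem_x; lia.
have [i [s [o [r_c [r [i_eq av]]]]]] :
    exists i s o, reach i s o /\ exists r, i = n :: r /\ avoids_all T123_321 (n :: s).
  apply: (reachable_until avoids1_123_321 (P := fun i _ _ => n \in i)) (@reachable_init _ _) n_x.
  move=> [|a i] s o _ // n_ai; case: (eqVneq a n) => [->|a_n].
    case av: (avoids_all _ (n :: s)); first by left; exists i.
    by right; split=> [|*]; [rewrite av | left; rewrite mem_head].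
  have n_i : n \in i by move: n_ai; rewrite inE eq_sym (negbTE a_n).
  by right; split=> *; left; rewrite ?inE n_i ?orbT.
subst i; have [w s_eq] : exists w, s = rcons w k.
  by case: (reachable_bottom avoids2_123_321 r_c) => // -[_ [n_k _]]; lia.
subst s; exists r, w, o; split=> //; split=> //.
have : n.-1 \in x by rewrite mem_x; lia.
rewrite (reach_mem _ r_c) !mem_cat mem_rcons !inE.
case/or4P=> [M_o|/orP[/eqP|M_w]|/eqP|//]; try lia.
  case: not_mem2_y; apply: (mem2_sT_out avoids1_123_321 r_c M_o).
  by rewrite mem_cat inE eqxx orbT.
suff : ~~ avoids_all T123_321 (n :: rcons w k) by rewrite av.
apply: (@monotone3_not_avoids _ n n.-1 k); first by rewrite subseq_cons2 subseq_rcons2.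
rewrite /monotone3; lia.
Qed.

Lemma stack_under_n r w o : reach (n :: r) (rcons w k) o ->
  avoids_all T123_321 (n :: rcons w k) -> w = [::] \/ exists2 t, w = [:: t] & t < k.
Proof.
move=> r_c av.
have /andP[k_w uniq_w] : (k \notin w) && uniq w.
  by move: (reach_uniq r_c); rewrite !cat_uniq rcons_uniq => /and3P[_ _ /and3P[]].
have w_lt_n u : u \in w -> u < n.
  by move=> u_w; apply: (stack_lt_n r_c (mem_head n r)); rewrite mem_rcons inE u_w orbT.
have w_lt_k u : u \in w -> u < k.
  move=> u_w; case: ltngtP => // [k_u|u_k]; last by move: k_w; rewrite -u_k u_w.
  move: av; apply: contraTT => _; apply: (@monotone3_not_avoids _ n u k).
    by rewrite subseq_cons2 subseq_rcons2.
  by rewrite /monotone3 k_u w_lt_n ?orbT.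
case: w {k_w} r_c uniq_w av w_lt_n w_lt_k => [|t [|t' w]] _ uniq_w av w_lt_n w_lt_k.
- by left.
- by right; exists t; rewrite // w_lt_k ?mem_head.
have t_t' : t != t' by move: uniq_w; rewrite /= inE negb_or => /andP[/andP[]].
exfalso; move: av; apply/negP; rewrite !rcons_cons.
case: (ltngtP t t') => [lt|gt|eq]; last by rewrite eq eqxx in t_t'.
  apply: (@monotone3_not_avoids _ t t' k).
    by apply: subseq_trans (subseq_cons _ n); rewrite !subseq_cons2 sub1seq mem_rcons mem_head.
  by rewrite /monotone3 lt w_lt_k // inE mem_head orbT.
apply: (@monotone3_not_avoids _ n t t'); first by rewrite !subseq_cons2 sub0seq.
by rewrite /monotone3 gt w_lt_n ?mem_head ?orbT.
Qed.

Lemma n_popped r w o : reach r (n :: rcons w k) o -> n.-1 \in r ->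
    (w = [::] \/ exists2 t, w = [:: t] & t < k) ->
  exists t a r' o', [/\ reach (a :: r') [:: t; k] o', a < t, t < k & n.-1 \in r'].
Proof.
move=> r_c M_r shape.
have [i [s [o' [r' [M_n|[t [a [r'' [w_t i_eq s_eq a_t M_r'']]]]]]]]] :
    exists i s o, reach i s o /\ (mem2 s n.-1 n \/ exists t a r',
      [/\ w = [:: t], i = a :: r', s = [:: t; k], a < t & n.-1 \in r']).
  pose P (i s _ : seq nat) := n.-1 \in i /\ exists s', s = s' ++ n :: rcons w k.
  apply: (reachable_until avoids1_123_321 (P := P)) r_c _; last by split=> //; exists [::].
  move=> [|a i] s o2 r2 [M_i [s' s_eq]] //; subst s; right; split=> [_|b st s_bst nav].
    case: (eqVneq a n.-1) => [->|a_M].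
      by right; left; rewrite mem2_cons eqxx inE mem_cat mem_head !orbT.
    by left; split; [move: M_i; rewrite inE eq_sym (negbTE a_M) | exists (a :: s')].
  case: s' r2 s_bst nav => [|b' s''] r2 [_ <-] nav; last by left; split=> //; exists s''.
  (* n is popped: the incoming a completes a monotone triple, which forces w = [:: t], a < t. *)
  have a_n := input_lt_n r2 (mem_head n (rcons w k)).
  case: shape nav => [->|[t -> t_k]]; first by rewrite avoids3 /monotone3; lia.
  rewrite avoids4 /monotone3 => nav; have a_t : a < t by lia.
  have M_a : n.-1 != a by lia.
  by right; right; exists t, a, i; split=> //; move: M_i; rewrite inE (negbTE M_a).
- by case: (not_mem2_stack r' M_n).
- subst i s; exists t, a, r'', o'; split=> //.
  by case: shape w_t => [-> // | [t' -> t'_k] [<-]].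
Qed.

Lemma low_entry_absurd t a r o : reach (a :: r) [:: t; k] o -> a < t -> t < k ->
  n.-1 \in r -> False.
Proof.
move=> r_c a_t t_k M_r.
have nav : ~~ avoids_all T123_321 [:: a; t; k] by rewrite avoids3 negbK /monotone3 a_t t_k.
have [i [s [o' [r' [t_o [z z_t M_z]]]]]] :
    exists i s o, reach i s o /\ t \in o /\ exists2 z, z < t & mem2 s n.-1 z.
  (* Some z < t lies directly above k, or is the next entry to be pushed onto [:: k]. *)
  pose P (i s o : seq nat) := [/\ n.-1 \in i, t \in o &
    exists2 z, z < t & (exists s', s = s' ++ [:: z; k]) \/ (s = [:: k] /\ head 0 i = z)].
  apply: (reachable_until avoids1_123_321 (P := P)) (reachable_pop r_c nav) _; last first.
    by split; [rewrite inE M_r orbT | rewrite mem_rcons mem_head | exists a => //; right].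
  move=> [|b i] s o2 r2 [M_i t_o [z z_t [[s' s_eq]|[s_k b_z]]]] //; subst s;
    right; split=> [_|d st s_dst nav'].
  - case: (eqVneq b n.-1) => [->|b_M].
      by right; split=> //; exists z => //; rewrite mem2_cons eqxx inE mem_cat mem_head !orbT.
    left; split=> //; first by move: M_i; rewrite inE eq_sym (negbTE b_M).
    by exists z => //; left; exists (b :: s').
  - case: s' r2 s_dst nav' => [|d' s''] r2 [d_z <-] nav'; subst d.
      have b_z : b < z by move: nav'; rewrite avoids3 negbK => /orP[] /andP[]; lia.
      left; split=> //; first by rewrite mem_rcons inE t_o orbT.
      by exists b; [lia | right].
    left; split=> //; first by rewrite mem_rcons inE t_o orbT.
    by exists z => //; left; exists s''.
  - rewrite -b_z /= in z_t; left; split=> //.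
      have M_b : n.-1 != b by lia.
      by move: M_i; rewrite inE (negbTE M_b).
    by exists b => //; left; exists [::].
  - by case: s_dst nav' => <- <-; rewrite avoids2_123_321.
apply: (west_sorted_avoids231 sorted_out (a := z) (b := t) (c := n.-1)); last lia.
  by apply: (mem2_sT_out avoids1_123_321 r' t_o); rewrite mem_cat (mem2l M_z).
exact: mem2_sT_stack r' M_z.
Qed.

Lemma first_entry_absurd : False.
Proof.
have [r [w [o [r_c [av M_r]]]]] := n_pushed.
have [t [a [r' [o' [r_t a_t t_k M_r']]]]] :=
  n_popped (reachable_push r_c av) M_r (stack_under_n r_c av).
exact: low_entry_absurd r_t a_t t_k M_r'.
Qed.

End FirstEntry.

Theorem lemma4p2 (n : nat) (x : seq nat) :
  0 < n -> in_Sort n [:: 1; 2; 3] [:: 3; 2; 1] x ->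
  head 0 x \in [:: n.-1; n].
Proof.
move=> n_pos [perm_x sorted_x]; case: x perm_x sorted_x => [|k x'] perm_x sorted_x.
  by move: (perm_size perm_x); rewrite size_iota /=; lia.
have : k \in iota 1 n by rewrite -(perm_mem perm_x) mem_head.
rewrite mem_iota => k_range; have [k_small|k_ge] := ltnP k n.-1.
  by case: (first_entry_absurd perm_x _ k_small); rewrite sorted_x iota_ltn_sorted.
by rewrite /= !inE; apply/orP; case: (ltnP k n) => ?; [left | right]; apply/eqP; lia.
Qed.
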